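(* Let $A$ be the random matrix defined in the context. If $D/(k\log k)\to\infty$, then with probability $1-o(1)$, $\kappa(A)\ge\Omega(\sqrt k)$. If $D/(k^2\log k)\to\infty$, then with probability $1-o(1)$, $\lambda(A)\le 2$.
   Context: Random instance: let $S_1,\dots,S_k\subseteq[D]$ be independent uniformly random subsets of $[D]$ (each element included independently with probability $1/2$), and let $A\in\mathbb{R}^{D\times k}$ have $A_{ij}=1/|S_j|$ if $i\in S_j$ and $A_{ij}=0$ otherwise. The $\ell_\infty\to\ell_1$ condition number $\lambda(A)$ is the smallest $\lambda$ such that $\|Ax\|_1\ge\|x\|_\infty/\lambda$ for all $x\in\mathbb{R}^k$. The $\ell_1$-condition number $\kappa(A)$ is the smallest $\kappa$ such that $\|Ax\|_1\ge\|x\|_1/\kappa$ for all $x\in\mathbb{R}^k$. Asymptotics are as $k\to\infty$. *)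

From HB Require Import structures.
From mathcomp Require Import all_boot.
From Stdlib Require Import Reals ClassicalDescription.
Set Implicit Arguments. Unset Strict Implicit. Unset Printing Implicit Defensive.

Definition pbool (P : Prop) : bool :=
  if excluded_middle_informative P then true else false.

(* Sample space: k-tuples (S_1,...,S_k) of subsets of [D] = 'I_D.
   Including each element independently with prob. 1/2 is the uniform
   distribution on this finite space. *)
Definition config (D k : nat) := {ffun 'I_k -> {set 'I_D}}.

Definition prob (D k : nat) (E : config D k -> Prop) : R :=
  (INR #|[pred S : config D k | pbool (E S)]| / INR #|{: config D k}|)%R.

Definition Amat (D k : nat) (S : config D k) (i : 'I_D) (j : 'I_k) : R :=
  if i \in S j then (/ INR #|S j|)%R else 0%R.

Definition rsum (n : nat) (f : 'I_n -> R) : R := \big[Rplus/0%R]_(i < n) f i.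
Definition norm1 (n : nat) (x : 'I_n -> R) : R := rsum (fun i => Rabs (x i)).
Definition norminf (n : nat) (x : 'I_n -> R) : R := \big[Rmax/0%R]_(i < n) Rabs (x i).

Definition Amul (D k : nat) (S : config D k) (x : 'I_k -> R) : 'I_D -> R :=
  fun i => rsum (fun j => (Amat S i j * x j)%R).

Definition l1_cond_ok (D k : nat) (S : config D k) (kap : R) : Prop :=
  (0 < kap)%R /\ forall x : 'I_k -> R, (norm1 x / kap <= norm1 (Amul S x))%R.

Definition linf_cond_ok (D k : nat) (S : config D k) (lam : R) : Prop :=
  (0 < lam)%R /\ forall x : 'I_k -> R, (norminf x / lam <= norm1 (Amul S x))%R.

(* kappa(A) >= t : every admissible kappa is >= t (kappa = +oo if none) *)
Definition kappa_ge (D k : nat) (S : config D k) (t : R) : Prop :=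
  forall kap, l1_cond_ok S kap -> (t <= kap)%R.

Definition lambda_le (D k : nat) (S : config D k) (t : R) : Prop :=
  exists lam, linf_cond_ok S lam /\ (lam <= t)%R.

(* Read row by row, a uniform configuration consists of D independent uniform
   vectors in {0,1}^k, so every column size |S_j| is Binomial(D, 1/2) and every
   overlap |S_j :&: S_j'| (j <> j') is Binomial(D, 1/4).  A Chernoff bound and a
   union bound show that with probability 1 - O(k e^{-D/128}) all columns lie
   within D/4 of D/2, and with probability 1 - O(k^2 e^{-D/(4608 k^2)}) all
   columns and overlaps lie within eps D of their means, eps = 1/(24k).  Both
   failure probabilities vanish under the respective growth conditions on D.

   Columns larger than D/4 have squared l2-norm 1/|S_j| < 4/D; choosing signs
   sigma greedily gives ||A sigma||_2^2 <= 4k/D, hence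
   ||A sigma||_1 <= sqrt D ||A sigma||_2 <= 2 sqrt k while ||sigma||_1 = k, so
   kappa(A) >= sqrt k / 2.

   If also the overlaps are balanced, pick j0 with |x_j0| = ||x||_inf and test
   A x against the +-1 pattern of S_j0: the coefficient of x_j0 is 1 and every
   other coefficient is at most 12 eps in absolute value, so
   ||A x||_1 >= ||x||_inf (1 - 12 eps k) >= ||x||_inf / 2, i.e. lambda(A) <= 2. *)

From HB Require Import structures.
From mathcomp Require Import all_boot.
From Stdlib Require Import Reals Lra Lia ClassicalDescription.
Set Implicit Arguments. Unset Strict Implicit. Unset Printing Implicit Defensive.

Local Open Scope R_scope.

HB.instance Definition _ := Monoid.isComLaw.Build R 0 Rplus
  (fun x y z => esym (Rplus_assoc x y z)) Rplus_comm Rplus_0_l.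
HB.instance Definition _ := Monoid.isComLaw.Build R 1 Rmult
  (fun x y z => esym (Rmult_assoc x y z)) Rmult_comm Rmult_1_l.
HB.instance Definition _ := Monoid.isMulLaw.Build R 0 Rmult Rmult_0_l Rmult_0_r.
HB.instance Definition _ := Monoid.isAddLaw.Build R Rmult Rplus
  Rmult_plus_distr_r Rmult_plus_distr_l.

Section RealSums.
Variables (T : finType) (P : pred T).

Lemma sumR_le (F G : T -> R) :
  (forall i, P i -> F i <= G i) ->
  \big[Rplus/0]_(i | P i) F i <= \big[Rplus/0]_(i | P i) G i.
Proof. by move=> FG; apply: (big_ind2 (fun a b => a <= b)) => // *; lra. Qed.

Lemma sumR_ge0 (F : T -> R) :
  (forall i, P i -> 0 <= F i) -> 0 <= \big[Rplus/0]_(i | P i) F i.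
Proof. by move=> F0; apply: (big_ind (fun a => 0 <= a)) => // *; lra. Qed.

Lemma sumRN (F : T -> R) :
  \big[Rplus/0]_(i | P i) - F i = - \big[Rplus/0]_(i | P i) F i.
Proof. by symmetry; apply: (big_morph Ropp) => [x y|]; lra. Qed.

Lemma sumRD (F G : T -> R) :
  \big[Rplus/0]_(i | P i) (F i + G i)
  = \big[Rplus/0]_(i | P i) F i + \big[Rplus/0]_(i | P i) G i.
Proof. exact: big_split. Qed.

Lemma sumR_mull c (F : T -> R) :
  c * \big[Rplus/0]_(i | P i) F i = \big[Rplus/0]_(i | P i) (c * F i).
Proof. exact: big_distrr. Qed.

Lemma INR_sum (F : T -> nat) :
  INR (\sum_(i | P i) F i) = \big[Rplus/0]_(i | P i) INR (F i).
Proof. by apply: (big_morph INR) => // x y; rewrite plus_INR. Qed.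

Lemma exp_sum (F : T -> R) :
  exp (\big[Rplus/0]_(i | P i) F i) = \big[Rmult/1]_(i | P i) exp (F i).
Proof. by apply: (big_morph exp) => [x y|]; rewrite ?exp_plus ?exp_0. Qed.

End RealSums.

Lemma sumR_sub_le (T : finType) (P : pred T) (F : T -> R) :
  (forall i, 0 <= F i) -> \big[Rplus/0]_(i | P i) F i <= \big[Rplus/0]_i F i.
Proof.
move=> F0; rewrite [X in _ <= X](bigID P) /=.
by rewrite -[X in X <= _]Rplus_0_r; apply/Rplus_le_compat_l/sumR_ge0.
Qed.

Lemma sumR_const (T : finType) (c : R) : \big[Rplus/0]_(i : T) c = INR #|T| * c.
Proof.
rewrite -[X in INR X]sum1_card INR_sum big_distrl /=.
by apply: eq_bigr => i _; rewrite Rmult_1_l.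
Qed.

Lemma sumR_card (T : finType) (A : {set T}) (a : R) :
  \big[Rplus/0]_(i : T) (if i \in A then a else 0) = INR #|A| * a.
Proof.
rewrite -big_mkcond /= -sum1_card INR_sum big_distrl /=.
by apply: eq_bigr => i _; rewrite Rmult_1_l.
Qed.

Lemma sumR_if (T : finType) (A : {set T}) (a b : R) :
  \big[Rplus/0]_(i : T) (if i \in A then a else b) = INR #|A| * a + (INR #|T| - INR #|A|) * b.
Proof.
transitivity (\big[Rplus/0]_(i : T) (b + (if i \in A then a - b else 0))).
  by apply: eq_bigr => i _; case: (i \in A); ring.
by rewrite sumRD sumR_const sumR_card; ring.
Qed.

Lemma prodR_const (I : finType) (c : R) : \big[Rmult/1]_(i : I) c = c ^ #|I|.
Proof.
by rewrite big_const; elim: #|I| => //= n ->.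
Qed.

Lemma Rinv_INR_ge0 n : 0 <= / INR n.
Proof.
by case: n => [|n]; [rewrite Rinv_0; lra | apply/Rlt_le/Rinv_0_lt_compat/lt_0_INR; lia].
Qed.

Lemma pboolP (P : Prop) : reflect P (pbool P).
Proof. by rewrite /pbool; case: excluded_middle_informative => h; constructor. Qed.

Definition ind (P : Prop) : R := if pbool P then 1 else 0.

Lemma ind_ge0 P : 0 <= ind P. Proof. by rewrite /ind; case: pbool; lra. Qed.
Lemma ind_T (P : Prop) : P -> ind P = 1. Proof. by rewrite /ind; case: pboolP. Qed.
Lemma ind_F (P : Prop) : ~ P -> ind P = 0. Proof. by rewrite /ind; case: pboolP. Qed.

Definition uprob (T : finType) (E : T -> Prop) : R :=
  INR #|[set x | pbool (E x)]| / INR #|T|.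

Lemma prob_uprob D k (E : config D k -> Prop) : prob E = uprob E.
Proof. by rewrite /uprob cardsE. Qed.

Section UniformProbability.
Variable T : finType.
Implicit Types E F G : T -> Prop.

Lemma uprobE E : uprob E = (\big[Rplus/0]_(x : T) ind (E x)) / INR #|T|.
Proof.
by rewrite /uprob -[X in X / _]Rmult_1_r -sumR_card; under eq_bigr do rewrite inE.
Qed.

Lemma uprob_le1 E : uprob E <= 1.
Proof.
rewrite /uprob; case: (posnP #|T|) => [->|/ltP/lt_0_INR T0]; first by rewrite Rdiv_0_r; lra.
rewrite -(Rinv_r (INR #|T|)); last lra.
by apply/Rmult_le_compat_r/le_INR/leP/max_card; apply: Rinv_INR_ge0.
Qed.

Lemma uprob_le E c :
  0 <= c -> \big[Rplus/0]_(x : T) ind (E x) <= c * INR #|T| -> uprob E <= c.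
Proof.
rewrite uprobE; case: (posnP #|T|) => [-> | /ltP/lt_0_INR T0] c0 sum_le.
  by rewrite Rdiv_0_r.
by apply: (Rmult_le_reg_r (INR #|T|)) => //; rewrite /Rdiv Rmult_assoc Rinv_l; lra.
Qed.

Lemma uprob_mono E F : (forall x, E x -> F x) -> uprob E <= uprob F.
Proof.
move=> EF; rewrite !uprobE; apply: Rmult_le_compat_r; first exact: Rinv_INR_ge0.
apply: sumR_le => x _.
case: (pboolP (E x)) => [Ex | /ind_F ->]; last exact: ind_ge0.
by rewrite (ind_T Ex) (ind_T (EF x Ex)); lra.
Qed.

Lemma uprob_le_add E F G :
  (forall x, E x -> F x \/ G x) -> uprob E <= uprob F + uprob G.
Proof.
move=> EFG; rewrite !uprobE /Rdiv -Rmult_plus_distr_r -big_split /=.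
apply: Rmult_le_compat_r; first exact: Rinv_INR_ge0.
apply: sumR_le => x _.
have := ind_ge0 (F x); have := ind_ge0 (G x).
case: (pboolP (E x)) => [Ex | /ind_F ->]; last lra.
by rewrite (ind_T Ex); case: (EFG x Ex) => /ind_T ->; lra.
Qed.

Lemma uprob_union_bound (B : finType) (bad : B -> T -> Prop) (good : T -> Prop) :
  (0 < #|T|)%nat -> (forall x, (forall b, ~ bad b x) -> good x) ->
  1 - \big[Rplus/0]_(b : B) uprob (bad b) <= uprob good.
Proof.
move=> /ltP/lt_0_INR T0 goodP.
have bad_sum : \big[Rplus/0]_(b : B) uprob (bad b) =
    (\big[Rplus/0]_(x : T) \big[Rplus/0]_(b : B) ind (bad b x)) / INR #|T|.
  rewrite exchange_big /= /Rdiv big_distrl /=.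
  by apply: eq_bigr => b _; rewrite uprobE.
have pointwise x : 1 - \big[Rplus/0]_(b : B) ind (bad b x) <= ind (good x).
  have sum_ge0 : 0 <= \big[Rplus/0]_(b : B) ind (bad b x).
    by apply: sumR_ge0 => *; apply: ind_ge0.
  case: (pboolP (good x)) => [/ind_T -> | not_good]; first lra.
  have [b bad_b] : exists b, bad b x.
    by apply: NNPP => none; apply/not_good/goodP => b bad_b; apply: none; exists b.
  rewrite ind_F // (bigD1 b) //= ind_T //.
  suff : 0 <= \big[Rplus/0]_(b' | b' != b) ind (bad b' x) by lra.
  by apply: sumR_ge0 => *; apply: ind_ge0.
have := sumR_le (fun x (_ : true) => pointwise x).
rewrite big_split /= sumR_const sumRN bad_sum uprobE => sum_le.
apply: (Rmult_le_reg_r (INR #|T|)) => //.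
rewrite Rmult_minus_distr_r !Rmult_assoc Rinv_l; lra.
Qed.

End UniformProbability.

Lemma uprob_bij (T U : finType) (g : T -> U) (E : U -> Prop) :
  bijective g -> uprob (fun x => E (g x)) = uprob E.
Proof.
move=> g_bij; rewrite !uprobE (bij_eq_card g_bij); congr (_ / _).
by rewrite [RHS](reindex g) //; apply: onW_bij.
Qed.

Lemma exp_le_quad l : Rabs l <= 1/2 -> exp l <= 1 + l + 2 * l^2.
Proof.
move=> l_small; have := Rle_abs (- l); rewrite Rabs_Ropp => l_ge.
have l_le := Rle_abs l.
have : 1 <= (1 - l) * (1 + l + 2 * l^2) by nra.
have : exp l * (1 - l) <= exp l * exp (- l).
  by apply: Rmult_le_compat_l; [apply/Rlt_le/exp_pos | have := exp_ineq1_le (- l); lra].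
rewrite -exp_plus Rplus_opp_r exp_0; nra.
Qed.

Lemma exp_le_mono x y : x <= y -> exp x <= exp y.
Proof. by case/Rle_lt_or_eq_dec => [/exp_increasing/Rlt_le | ->] //; lra. Qed.

Lemma exp_pow x n : exp x ^ n = exp (INR n * x).
Proof.
elim: n => [|n IH]; first by rewrite Rmult_0_l exp_0.
by rewrite S_INR /= IH -exp_plus; congr exp; ring.
Qed.

Lemma INR_expn a n : INR (expn a n) = INR a ^ n.
Proof. by elim: n => [|n IH]; rewrite ?expn0 // expnS mult_INR IH. Qed.

Lemma ind_abs_ge_le t X lam : 0 <= lam ->
  ind (t <= Rabs X) <= exp (- (lam * t)) * (exp (lam * X) + exp (- lam * X)).
Proof.
move=> lam0; case: (pboolP (t <= Rabs X)) => [tX | /ind_F ->]; last first.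
  by have := exp_pos (- (lam * t)); have := exp_pos (lam * X); have := exp_pos (- lam * X); nra.
rewrite ind_T // Rmult_plus_distr_l -!exp_plus.
have pos1 := exp_pos (- (lam * t) + lam * X); have pos2 := exp_pos (- (lam * t) + - lam * X).
have [Xt | Xt] : lam * t <= lam * X \/ lam * t <= - lam * X.
  case: (Rle_or_lt 0 X) => X0; [rewrite Rabs_right in tX | rewrite Rabs_left in tX]; try lra.
    by left; nra.
  by right; nra.
all: have := exp_le_mono (Rplus_le_compat_l (- (lam * t)) _ _ Xt).
all: rewrite Rplus_opp_l exp_0 => ge1; lra.
Qed.

Section CountDeviation.
Variables (T : finType) (A : {set T}) (mu : R).
Hypotheses (A_density : INR #|A| = mu * INR #|T|) (mu01 : 0 <= mu <= 1).

Lemma sum_exp_centered_le lam : Rabs lam <= 1/2 ->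
  \big[Rplus/0]_(x : T) exp (lam * ((if x \in A then 1 else 0) - mu))
  <= INR #|T| * exp (2 * lam^2 * mu).
Proof.
move=> lam_small.
have -> : \big[Rplus/0]_(x : T) exp (lam * ((if x \in A then 1 else 0) - mu))
          = INR #|T| * exp (- lam * mu) * (1 + mu * (exp lam - 1)).
  rewrite (eq_bigr (fun x => if x \in A then exp lam * exp (- lam * mu) else exp (- lam * mu))).
    by rewrite sumR_if A_density; ring.
  by move=> x _; rewrite -exp_plus; case: (x \in A); congr exp; ring.
have mgf_le : 1 + mu * (exp lam - 1) <= exp (mu * (lam + 2 * lam ^ 2)).
  by apply: Rle_trans (exp_ineq1_le _); have := exp_le_quad lam_small; nra.
have -> : exp (2 * lam ^ 2 * mu) = exp (- lam * mu) * exp (mu * (lam + 2 * lam ^ 2)).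
  by rewrite -exp_plus; congr exp; ring.
rewrite Rmult_assoc; apply: Rmult_le_compat_l; first exact: pos_INR.
by apply: Rmult_le_compat_l => //; apply/Rlt_le/exp_pos.
Qed.

Lemma sum_exp_count_le (D : nat) lam : Rabs lam <= 1/2 ->
  \big[Rplus/0]_(w : {ffun 'I_D -> T}) exp (lam * (INR #|[set i | w i \in A]| - INR D * mu))
  <= INR #|T| ^ D * exp (2 * lam^2 * mu * INR D).
Proof.
move=> lam_small.
set F := fun (_ : 'I_D) (x : T) => exp (lam * ((if x \in A then 1 else 0) - mu)).
rewrite (eq_bigr (fun w : {ffun 'I_D -> T} => \big[Rmult/1]_(i : 'I_D) F i (w i)))
  => [|w _]; last first.
  rewrite -exp_sum -big_distrr /= big_split /= sumRN sumR_const card_ord.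
  by rewrite -[INR #|_|]Rmult_1_r -sumR_card; under eq_bigr do rewrite inE.
rewrite -bigA_distr_bigA /= /F prodR_const card_ord.
have -> : INR #|T| ^ D * exp (2 * lam^2 * mu * INR D) = (INR #|T| * exp (2 * lam^2 * mu)) ^ D.
  by rewrite Rpow_mult_distr exp_pow; congr (_ * exp _); ring.
apply: pow_incr; split; first by apply: sumR_ge0 => x _; apply/Rlt_le/exp_pos.
exact: sum_exp_centered_le.
Qed.

Lemma uprob_count_dev (D : nat) eps : 0 < eps <= 2 ->
  uprob (fun w : {ffun 'I_D -> T} =>
           eps * INR D <= Rabs (INR #|[set i | w i \in A]| - INR D * mu))
  <= 2 * exp (- eps^2 * INR D / 8).
Proof.
move=> eps_range; set lam := eps / 4.
have lam0 : 0 <= lam by rewrite /lam; lra.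
have lam_small : Rabs lam <= 1/2 by rewrite Rabs_right /lam; lra.
have D0 := pos_INR D.
set X := fun w : {ffun 'I_D -> T} => INR #|[set i | w i \in A]| - INR D * mu.
have exp_tail : exp (- (lam * (eps * INR D))) * exp (2 * lam ^ 2 * mu * INR D)
                <= exp (- eps ^ 2 * INR D / 8).
  rewrite -exp_plus; apply: exp_le_mono; rewrite /lam.
  have : 0 <= eps ^ 2 * INR D by apply: Rmult_le_pos => //; apply: pow2_ge_0.
  nra.
apply: uprob_le; first by apply/Rmult_le_pos/Rlt_le/exp_pos; lra.
apply: Rle_trans (sumR_le (fun w _ => ind_abs_ge_le (eps * INR D) (X w) lam0)) _.
set bound := exp (- eps ^ 2 * INR D / 8) in exp_tail *.
rewrite -big_distrr big_split /= card_ffun card_ord INR_expn.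
have sum_pos := sum_exp_count_le D lam_small.
have sum_neg := sum_exp_count_le D (lam := - lam) ltac:(by rewrite Rabs_Ropp).
rewrite (_ : (- lam) ^ 2 = lam ^ 2) in sum_neg; last ring.
apply: Rle_trans (Rmult_le_compat_l _ _ _ (Rlt_le _ _ (exp_pos _))
                   (Rplus_le_compat _ _ _ _ sum_pos sum_neg)) _.
have := Rmult_le_compat_l _ _ _ (pow_le _ D (pos_INR #|T|)) exp_tail.
lra.
Qed.
End CountDeviation.

Section RowsAsConfigurations.
Variables D k : nat.

Definition config_of_rows (w : {ffun 'I_D -> {ffun 'I_k -> bool}}) : config D k :=
  [ffun j => [set i | w i j]].

Definition rows_of_config (S : config D k) : {ffun 'I_D -> {ffun 'I_k -> bool}} :=
  [ffun i => [ffun j => i \in S j]].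

Lemma config_of_rows_bij : bijective config_of_rows.
Proof.
exists rows_of_config => [w | S].
  by apply/ffunP => i; apply/ffunP => j; rewrite !ffunE inE.
by apply/ffunP => j; apply/setP => i; rewrite !ffunE inE !ffunE.
Qed.

End RowsAsConfigurations.

Section BooleanVectors.
Variable I : finType.

Definition flip_at (j : I) (c : {ffun I -> bool}) : {ffun I -> bool} :=
  [ffun l => (l == j) (+) c l].

Lemma flip_atK j : involutive (flip_at j).
Proof. by move=> c; apply/ffunP => l; rewrite !ffunE addbA addbb. Qed.

Lemma flip_atE j l c : flip_at j c l = (l == j) (+) c l.
Proof. by rewrite ffunE. Qed.

Lemma card_bit (j : I) :
  (#|[set c : {ffun I -> bool} | c j]| * 2 = #|{ffun I -> bool}|)%nat.
Proof.
set A := [set c : {ffun I -> bool} | c j].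
rewrite -(cardsC A).
have -> : ~: A = flip_at j @^-1: A by apply/setP => c; rewrite !inE flip_atE eqxx.
by rewrite (card_preimset _ (inv_inj (flip_atK j))) muln2 addnn.
Qed.

Lemma card_bit_pair (j j' : I) : j != j' ->
  (#|[set c : {ffun I -> bool} | c j && c j']| * 4 = #|{ffun I -> bool}|)%nat.
Proof.
move=> jj'; rewrite -(card_bit j).
set A := [set c : {ffun I -> bool} | c j]; set B := [set c : {ffun I -> bool} | c j'].
have -> : [set c : {ffun I -> bool} | c j && c j'] = A :&: B by apply/setP => c; rewrite !inE.
rewrite -(cardsID B A).
have -> : A :\: B = flip_at j' @^-1: (A :&: B).
  by apply/setP => c; rewrite !inE !flip_atE eqxx (negbTE jj') andbC.
by rewrite (card_preimset _ (inv_inj (flip_atK j'))) addnn -muln2 -mulnA.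
Qed.

End BooleanVectors.

Lemma INR_card_bit (I : finType) (j : I) :
  INR #|[set c : {ffun I -> bool} | c j]| = 1/2 * INR #|{ffun I -> bool}|.
Proof. by rewrite -(card_bit j) mult_INR /=; field. Qed.

Lemma INR_card_bit_pair (I : finType) (j j' : I) : j != j' ->
  INR #|[set c : {ffun I -> bool} | c j && c j']| = 1/4 * INR #|{ffun I -> bool}|.
Proof. by move=> jj'; rewrite -(card_bit_pair jj') mult_INR /=; field. Qed.

Lemma prob_rows D k (E : config D k -> Prop) :
  prob E = uprob (fun w : {ffun 'I_D -> {ffun 'I_k -> bool}} => E (config_of_rows w)).
Proof. by rewrite prob_uprob (uprob_bij _ (config_of_rows_bij D k)). Qed.

Lemma prob_col_dev D k (j : 'I_k) eps : 0 < eps <= 2 ->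
  prob (fun S : config D k => eps * INR D <= Rabs (INR #|S j| - INR D * (1/2)))
  <= 2 * exp (- eps^2 * INR D / 8).
Proof.
move=> eps_range; rewrite prob_rows.
have half01 : 0 <= 1/2 <= 1 by lra.
apply: Rle_trans (uprob_count_dev (INR_card_bit j) half01 D eps_range).
apply: uprob_mono => w; rewrite ffunE.
by congr (_ <= Rabs (INR _ - _)); apply: eq_card => i; rewrite !inE.
Qed.

Lemma prob_pair_dev D k (j j' : 'I_k) eps : j != j' -> 0 < eps <= 2 ->
  prob (fun S : config D k => eps * INR D <= Rabs (INR #|S j :&: S j'| - INR D * (1/4)))
  <= 2 * exp (- eps^2 * INR D / 8).
Proof.
move=> jj' eps_range; rewrite prob_rows.
have quarter01 : 0 <= 1/4 <= 1 by lra.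
apply: Rle_trans (uprob_count_dev (INR_card_bit_pair jj') quarter01 D eps_range).
apply: uprob_mono => w; rewrite !ffunE.
by congr (_ <= Rabs (INR _ - _)); apply: eq_card => i; rewrite !inE.
Qed.

(* Choosing each new sign against the current partial sum makes every cross
   term nonpositive: a derandomisation of averaging over random signs. *)
Lemma exists_signs_sqnorm_le D (v : nat -> 'I_D -> R) m :
  exists s : nat -> R, (forall j, s j = 1 \/ s j = -1) /\
    \big[Rplus/0]_(i : 'I_D) (\big[Rplus/0]_(j < m) (s j * v j i)) ^ 2
    <= \big[Rplus/0]_(i : 'I_D) \big[Rplus/0]_(j < m) v j i ^ 2.
Proof.
elim: m => [|m [s [s_sign IH]]].
  exists (fun _ => 1); split; first by left.
  by apply: sumR_le => i _; rewrite !big_ord0; lra.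
set u := fun i => \big[Rplus/0]_(j < m) (s j * v j i).
set cross := \big[Rplus/0]_(i : 'I_D) (u i * v m i).
set sg := if Rle_dec 0 cross then -1 else 1.
have sg_sq : sg ^ 2 = 1 by rewrite /sg; case: (Rle_dec 0 cross) => ? /=; ring.
have sg_cross : sg * cross <= 0 by rewrite /sg; case: (Rle_dec 0 cross) => ? /=; lra.
exists (fun n => if n == m then sg else s n); split.
  move=> j; case: (j == m); last exact: s_sign.
  by rewrite /sg; case: (Rle_dec 0 cross) => ? /=; [right | left].
have new_sum i : \big[Rplus/0]_(j < m.+1) ((if j == m :> nat then sg else s j) * v j i)
                 = u i + sg * v m i.
  rewrite big_ord_recr /= eqxx; congr Rplus.
  by apply: eq_bigr => j _; rewrite (ltn_eqF (ltn_ord j)).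
rewrite (eq_bigr _ (fun i _ => f_equal (fun x => x ^ 2) (new_sum i))).
rewrite [X in _ <= X](eq_bigr (fun i => \big[Rplus/0]_(j < m) v j i ^ 2 + v m i ^ 2));
  last first.
  by move=> i _; rewrite big_ord_recr.
have -> : \big[Rplus/0]_(i : 'I_D) (u i + sg * v m i) ^ 2 =
          \big[Rplus/0]_(i : 'I_D) u i ^ 2 + 2 * (sg * cross)
          + sg ^ 2 * \big[Rplus/0]_(i : 'I_D) v m i ^ 2.
  rewrite /cross !big_distrr -!big_split /=.
  by apply: eq_bigr => i _; ring.
rewrite sumRD sg_sq Rmult_1_l; apply: Rplus_le_compat; last exact: Rle_refl.
have IH_u : \big[Rplus/0]_(i : 'I_D) u i ^ 2
             <= \big[Rplus/0]_(i : 'I_D) \big[Rplus/0]_(j < m) v j i ^ 2 := IH.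
by apply: (Rle_trans _ _ _ _ IH_u); lra.
Qed.

(* AM-GM; summed over coordinates it stands in for Cauchy-Schwarz. *)
Lemma Rabs_le_sq_scaled y c : 0 < c -> Rabs y <= c * y ^ 2 / 4 + / c.
Proof.
move=> c0; have : 0 <= (c * Rabs y - 2) ^ 2 by apply: pow2_ge_0.
rewrite -(Rsqr_pow2 y) (Rsqr_abs y) Rsqr_pow2 => sq_ge0.
apply: (Rmult_le_reg_l (4 * c)); first lra.
have -> : 4 * c * (c * Rabs y ^ 2 / 4 + / c) = c ^ 2 * Rabs y ^ 2 + 4 by field; lra.
nra.
Qed.

Lemma norm1_le_sqnorm n (y : 'I_n -> R) c : 0 < c ->
  norm1 y <= c / 4 * \big[Rplus/0]_(i < n) y i ^ 2 + INR n / c.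
Proof.
move=> c0; rewrite /norm1 /rsum.
apply: Rle_trans (sumR_le (fun i _ => Rabs_le_sq_scaled (y i) c0)) _.
rewrite big_split /= sumR_const card_ord big_distrr /=.
apply: Req_le; congr Rplus; apply: eq_bigr => i _; field.
Qed.

Lemma INR_card_le_ord D (A : {set 'I_D}) : INR #|A| <= INR D.
Proof. by apply/le_INR/leP; apply: leq_trans (max_card _) _; rewrite card_ord. Qed.

Lemma sum_Amat_col_sq D k (S : config D k) j : 0 < INR #|S j| ->
  \big[Rplus/0]_(i : 'I_D) Amat S i j ^ 2 = / INR #|S j|.
Proof.
move=> Sj0; rewrite (eq_bigr (fun i => if i \in S j then (/ INR #|S j|) ^ 2 else 0)).
  by rewrite sumR_card; field; lra.
by move=> i _; rewrite /Amat; case: (i \in S j) => //; ring.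
Qed.

Lemma kappa_ge_witness D k (S : config D k) (x : 'I_k -> R) b :
  0 < b -> norm1 (Amul S x) <= b -> kappa_ge S (norm1 x / b).
Proof.
move=> b0 Ax_le kap [kap0 kap_ok].
have := Rle_trans _ _ _ (kap_ok x) Ax_le.
move=> /(Rmult_le_compat_l kap _ _ (Rlt_le _ _ kap0)).
rewrite /Rdiv -Rmult_assoc Rinv_r_simpl_m; last lra.
move=> x_le; apply: (Rmult_le_reg_r b) => //.
rewrite Rmult_assoc Rinv_l; lra.
Qed.

Lemma kappa_ge_balanced_columns D k (S : config D k) : (0 < k)%nat ->
  (forall j, Rabs (INR #|S j| - INR D * (1/2)) < 1/4 * INR D) ->
  kappa_ge S (1/2 * sqrt (INR k)).
Proof.
case: k S => [|k] S // _ col_bal.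
have S_large j : INR D / 4 < INR #|S j| by have /Rabs_def2 := col_bal j; lra.
have D0 : 0 < INR D by have := S_large ord0; have := INR_card_le_ord (S ord0); lra.
have [s [s_sign s_sum]] := exists_signs_sqnorm_le (fun n i => Amat S i (inord n)) k.+1.
set sigma := fun j : 'I_k.+1 => s j.
have sq_le : \big[Rplus/0]_(i < D) Amul S sigma i ^ 2 <= INR k.+1 * (4 / INR D).
  have -> : \big[Rplus/0]_(i < D) Amul S sigma i ^ 2
            = \big[Rplus/0]_(i < D) (\big[Rplus/0]_(j < k.+1) (s j * Amat S i (inord j))) ^ 2.
    apply: eq_bigr => i _; congr (_ ^ 2); apply: eq_bigr => j _.
    by rewrite inord_val /sigma Rmult_comm.
  apply: Rle_trans s_sum _; rewrite exchange_big.
  have -> : INR k.+1 * (4 / INR D) = \big[Rplus/0]_(j : 'I_k.+1) (4 / INR D).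
    by rewrite sumR_const card_ord.
  apply: sumR_le => j _; have Sj := S_large j.
  rewrite inord_val sum_Amat_col_sq; last lra.
  rewrite (_ : 4 / INR D = / (INR D / 4)); last by field; lra.
  by apply: Rinv_le_contravar; lra.
set r := sqrt (INR k.+1).
have r0 : 0 < r by apply/sqrt_lt_R0/lt_0_INR; lia.
have rr : r * r = INR k.+1 by apply/sqrt_sqrt/pos_INR.
have A_sigma : norm1 (Amul S sigma) <= 2 * r.
  have c0 : 0 < INR D / r by apply: Rdiv_lt_0_compat.
  apply: Rle_trans (norm1_le_sqnorm _ c0) _.
  have := Rmult_le_compat_l (INR D / r / 4) _ _ ltac:(lra) sq_le.
  have -> : INR D / r / 4 * (INR k.+1 * (4 / INR D)) = r by rewrite -rr; field; lra.
  have -> : INR D / (INR D / r) = r by field; lra.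
  lra.
have sigma_norm : norm1 sigma = INR k.+1.
  rewrite /norm1 /rsum (eq_bigr (fun _ => 1)) ?sumR_const ?card_ord ?Rmult_1_r // => j _.
  by rewrite /sigma; case: (s_sign j) => ->; rewrite ?Rabs_Ropp Rabs_R1.
have := kappa_ge_witness (x := sigma) (Rmult_lt_0_compat 2 r ltac:(lra) r0) A_sigma.
by rewrite sigma_norm -rr (_ : r * r / (2 * r) = 1/2 * r) //; field; lra.
Qed.

Lemma Rabs_le_lower y b : Rabs y <= b -> - b <= y.
Proof. by have := Rle_abs (- y); rewrite Rabs_Ropp; lra. Qed.

Lemma norminf_ge n (x : 'I_n -> R) j : Rabs (x j) <= norminf x.
Proof.
rewrite /norminf; elim: (index_enum _) (mem_index_enum j) => [//|i s IH].
rewrite in_cons big_cons => /orP[/eqP <- | /IH j_le]; first exact: Rmax_l.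
exact: Rle_trans j_le (Rmax_r _ _).
Qed.

Lemma norminf_attained n (x : 'I_n -> R) :
  norminf x = 0 \/ exists j, norminf x = Rabs (x j).
Proof.
apply: (big_ind (fun v => v = 0 \/ exists j, v = Rabs (x j))); [by left | | by right; exists i].
by move=> a b Pa Pb; rewrite /Rmax; case: Rle_dec.
Qed.

Lemma norm1_ge0 n (x : 'I_n -> R) : 0 <= norm1 x.
Proof. by apply: sumR_ge0 => i _; apply: Rabs_pos. Qed.

Lemma norm1_Amul_ge_dual D k (S : config D k) (w : 'I_D -> R) (x : 'I_k -> R) :
  (forall i, Rabs (w i) <= 1) ->
  \big[Rplus/0]_(j : 'I_k) (x j * \big[Rplus/0]_(i : 'I_D) (w i * Amat S i j))
  <= norm1 (Amul S x).
Proof.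
move=> w_le.
have -> : \big[Rplus/0]_(j : 'I_k) (x j * \big[Rplus/0]_(i : 'I_D) (w i * Amat S i j))
          = \big[Rplus/0]_(i : 'I_D) (w i * Amul S x i).
  under eq_bigr do rewrite sumR_mull.
  rewrite exchange_big; apply: eq_bigr => i _; rewrite /Amul /rsum sumR_mull.
  by apply: eq_bigr => j _; ring.
apply: sumR_le => i _; apply: Rle_trans (Rle_abs _) _; rewrite Rabs_mult.
by have := w_le i; have := Rabs_pos (Amul S x i); nra.
Qed.

Lemma sum_signed_Amat D k (S : config D k) (j j0 : 'I_k) : 0 < INR #|S j| ->
  \big[Rplus/0]_(i : 'I_D) ((if i \in S j0 then 1 else -1) * Amat S i j)
  = (2 * INR #|S j :&: S j0| - INR #|S j|) / INR #|S j|.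
Proof.
move=> Sj0.
rewrite (eq_bigr (fun i => / INR #|S j| * ((if i \in S j :&: S j0 then 2 else 0)
                              + (if i \in S j then -1 else 0)))); last first.
  by move=> i _; rewrite /Amat in_setI; case: (i \in S j); case: (i \in S j0) => /=; ring.
rewrite -sumR_mull sumRD !sumR_card; field; lra.
Qed.

Lemma overlap_coef_small D (Sj Sj0 : {set 'I_D}) eps : 24 * eps <= 1 ->
  Rabs (INR #|Sj| - INR D * (1/2)) < eps * INR D ->
  Rabs (INR #|Sj :&: Sj0| - INR D * (1/4)) < eps * INR D ->
  Rabs ((2 * INR #|Sj :&: Sj0| - INR #|Sj|) / INR #|Sj|) <= 12 * eps.
Proof.
move=> eps_small /Rabs_def2[col1 col2] /Rabs_def2[pair1 pair2].
have D0 := pos_INR D.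
have Sj_large : INR D / 4 < INR #|Sj| by nra.
rewrite /Rdiv Rabs_mult Rabs_inv (Rabs_right (INR #|Sj|)); last lra.
apply: (Rmult_le_reg_r (INR #|Sj|)); first lra.
rewrite Rmult_assoc Rinv_l; last lra.
by rewrite Rmult_1_r; apply: Rabs_le; split; nra.
Qed.

Lemma sum_ge_half_of_dominant (I : finType) (f : I -> R) (j0 : I) (M d : R) :
  0 <= M -> 0 <= d -> 2 * d * INR #|I| <= 1 ->
  f j0 = M -> (forall j, j != j0 -> - (M * d) <= f j) ->
  M / 2 <= \big[Rplus/0]_j f j.
Proof.
move=> M0 d0 d_small head tail; rewrite (bigD1 j0) //= head.
suff : - (M / 2) <= \big[Rplus/0]_(j | j != j0) f j by lra.
apply: Rle_trans _ (sumR_le tail); rewrite sumRN.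
have Md0 : 0 <= M * d by apply: Rmult_le_pos.
apply: Rle_trans _ (Ropp_le_contravar _ _ (sumR_sub_le _ (fun _ => Md0))).
by rewrite sumR_const; have := Rmult_le_compat_l M _ _ M0 d_small; lra.
Qed.

Lemma lambda_le_balanced D k (S : config D k) eps : 24 * eps * INR k <= 1 ->
  (forall j, Rabs (INR #|S j| - INR D * (1/2)) < eps * INR D) ->
  (forall j j', j != j' -> Rabs (INR #|S j :&: S j'| - INR D * (1/4)) < eps * INR D) ->
  lambda_le S 2.
Proof.
move=> eps_k col_bal pair_bal; exists 2; split; last lra; split => [|x]; first lra.
case: (norminf_attained x) => [-> | [j0 M_eq]].
  by rewrite /Rdiv Rmult_0_l; apply: norm1_ge0.
have k_pos : 1 <= INR k by apply: (le_INR 1); apply/leP; apply: leq_ltn_trans (ltn_ord j0).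
have eps0 : 0 <= eps.
  by have := col_bal j0; have := Rabs_pos (INR #|S j0| - INR D * (1/2)); have := pos_INR D; nra.
have Sj_pos j : 0 < INR #|S j|.
  by have /Rabs_def2 := col_bal j; have := pos_INR D; nra.
set M := norminf x in M_eq *.
set sg := if Rle_dec 0 (x j0) then 1 else -1.
have sg_x : sg * x j0 = M by rewrite M_eq /sg; case: (Rle_dec 0 (x j0)) => ? /=;
  [rewrite Rabs_right | rewrite Rabs_left]; lra.
set w := fun i => sg * (if i \in S j0 then 1 else -1).
have sg_abs : Rabs sg = 1.
  by rewrite /sg; case: (Rle_dec 0 (x j0)) => ? /=; rewrite ?Rabs_Ropp Rabs_R1.
have w_le i : Rabs (w i) <= 1.
  by rewrite /w Rabs_mult sg_abs; case: (i \in S j0); rewrite ?Rabs_Ropp Rabs_R1; lra.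
have coef j : \big[Rplus/0]_(i : 'I_D) (w i * Amat S i j)
              = sg * ((2 * INR #|S j :&: S j0| - INR #|S j|) / INR #|S j|).
  by rewrite -sum_signed_Amat // sumR_mull; apply: eq_bigr => i _; rewrite /w Rmult_assoc.
have eps_small : 24 * eps <= 1 by nra.
have M0 : 0 <= M by rewrite M_eq; apply: Rabs_pos.
have head : x j0 * \big[Rplus/0]_(i : 'I_D) (w i * Amat S i j0) = M.
  by rewrite coef setIid -sg_x; field; have := Sj_pos j0; lra.
have tail_term j : j != j0 ->
    - (M * (12 * eps)) <= x j * \big[Rplus/0]_(i : 'I_D) (w i * Amat S i j).
  move=> jj0; apply: Rabs_le_lower; rewrite coef Rabs_mult (Rabs_mult sg) sg_abs Rmult_1_l.
  apply: Rmult_le_compat; [exact: Rabs_pos | exact: Rabs_pos | exact: norminf_ge | ].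
  exact: overlap_coef_small eps_small (col_bal j) (pair_bal j j0 jj0).
apply: Rle_trans _ (norm1_Amul_ge_dual S x w_le).
apply: (sum_ge_half_of_dominant (j0 := j0) M0 _ _ head tail_term); first lra.
by rewrite card_ord; lra.
Qed.

Lemma card_config_gt0 D k : (0 < #|{: config D k}|)%nat.
Proof. by apply/card_gt0P; exists [ffun=> set0]. Qed.

Lemma prob_kappa_ge D k : (0 < k)%nat ->
  1 - 2 * INR k * exp (- INR D / 128)
  <= prob (fun S : config D k => kappa_ge S (1/2 * sqrt (INR k))).
Proof.
move=> k0.
set bad := fun (j : 'I_k) (S : config D k) =>
  1/4 * INR D <= Rabs (INR #|S j| - INR D * (1/2)).
rewrite prob_uprob; apply: Rle_trans _ (uprob_union_bound (bad := bad) (card_config_gt0 D k) _).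
  have bad_le j : uprob (bad j) <= 2 * exp (- INR D / 128).
    have := prob_col_dev D j (eps := 1/4) ltac:(lra); rewrite prob_uprob => col_le.
    by apply: Rle_trans col_le _; apply: Req_le; congr (2 * exp _); field.
  have := sumR_le (fun j (_ : true) => bad_le j); rewrite sumR_const card_ord; lra.
move=> S good_cols; apply: kappa_ge_balanced_columns => // j.
exact: Rnot_le_lt _ _ (good_cols j).
Qed.

Lemma prob_lambda_le D k : (0 < k)%nat ->
  1 - 4 * INR k ^ 2 * exp (- (INR D / INR k ^ 2) / 4608)
  <= prob (fun S : config D k => lambda_le S 2).
Proof.
move=> k0; have k1 : 1 <= INR k by apply: (le_INR 1); apply/leP.
set eps := 1 / (24 * INR k).
have eps_range : 0 < eps <= 2.
  rewrite /eps; split; first by apply: Rdiv_lt_0_compat; lra.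
  rewrite /Rdiv Rmult_1_l -[2]Rinv_inv.
  by apply: Rinv_le_contravar; lra.
have tail_eq : - eps ^ 2 * INR D / 8 = - (INR D / INR k ^ 2) / 4608 by rewrite /eps; field; lra.
set col_dev := fun (j : 'I_k) (S : config D k) =>
  eps * INR D <= Rabs (INR #|S j| - INR D * (1/2)).
set pair_dev := fun (j j' : 'I_k) (S : config D k) =>
  j != j' /\ eps * INR D <= Rabs (INR #|S j :&: S j'| - INR D * (1/4)).
set bad := fun (jj : 'I_k * 'I_k) S => col_dev jj.1 S \/ pair_dev jj.1 jj.2 S.
rewrite prob_uprob; apply: Rle_trans _ (uprob_union_bound (bad := bad) (card_config_gt0 D k) _).
  have bad_le jj : uprob (bad jj) <= 4 * exp (- (INR D / INR k ^ 2) / 4608).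
    case: jj => j j'; apply: Rle_trans (uprob_le_add (fun S (h : bad (j, j') S) => h)) _.
    have col_le := prob_col_dev D j eps_range; rewrite prob_uprob in col_le.
    have pair_le : uprob (pair_dev j j') <= 2 * exp (- eps ^ 2 * INR D / 8).
      case: (eqVneq j j') => [<- | jj'].
        by apply: Rle_trans _ col_le; apply: uprob_mono => S [/negP].
      apply: Rle_trans _ (prob_pair_dev D jj' eps_range); rewrite prob_uprob.
      by apply: uprob_mono => S [].
    rewrite tail_eq in col_le pair_le.
    by apply: Rle_trans (Rplus_le_compat _ _ _ _ col_le pair_le) _; lra.
  have := sumR_le (fun jj (_ : true) => bad_le jj).
  rewrite sumR_const card_prod card_ord mult_INR; lra.
move=> S all_good; apply: (@lambda_le_balanced D k S eps).
- by apply: Req_le; rewrite /eps; field; lra.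
- move=> j; apply: Rnot_le_lt => dev; apply: (all_good (j, j)); by left.
- move=> j j' jj'; apply: Rnot_le_lt => dev; apply: (all_good (j, j')); by right.
Qed.

Lemma cv_infty_INR : cv_infty INR.
Proof.
move=> M; have [N MN] := INR_archimed 1 M Rlt_0_1.
exists N => n Nn; have := le_INR _ _ Nn; lra.
Qed.

Lemma cv_one_of_lower_bound (u g : nat -> R) N :
  (forall n, u n <= 1) -> (forall n, (N <= n)%coq_nat -> 1 - g n <= u n) ->
  Un_cv g 0 -> Un_cv u 1.
Proof.
move=> u_le1 u_ge g0 eps eps0; have [N' g_small] := g0 eps eps0.
exists (Nat.max N N') => n n_ge; rewrite /R_dist Rabs_left1; last by have := u_le1 n; lra.
have := u_ge n ltac:(lia); have := g_small n ltac:(lia).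
rewrite /R_dist Rminus_0_r => /Rabs_def2 [? ?] ?; lra.
Qed.

Lemma cv_infty_le (u v : nat -> R) N :
  (forall n, (N <= n)%coq_nat -> u n <= v n) -> cv_infty u -> cv_infty v.
Proof.
move=> uv u_big M; have [N' u_ge] := u_big M.
by exists (Nat.max N N') => n n_ge; apply: Rlt_le_trans (u_ge n _) (uv n _); lia.
Qed.

Lemma ln_INR_gt0 n : (2 <= n)%coq_nat -> 0 < ln (INR n).
Proof.
move=> n2; rewrite -ln_1; apply: ln_increasing; first lra.
by have : INR 2 <= INR n := le_INR 2 n n2; rewrite /=; lra.
Qed.

Lemma cv_infty_div_ln (a : nat -> R) : (forall n, 0 <= a n) ->
  cv_infty (fun n => a n / (INR n * ln (INR n))) -> cv_infty (fun n => a n / ln (INR n)).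
Proof.
move=> a0; apply: (@cv_infty_le _ _ 2) => n n2.
have ln0 := ln_INR_gt0 n2; have n1 : 1 <= INR n by apply: (le_INR 1); lia.
have -> : a n / (INR n * ln (INR n)) = a n / ln (INR n) * / INR n by field; lra.
rewrite -[X in _ <= X]Rmult_1_r; apply: Rmult_le_compat_l.
  by apply/Rmult_le_pos/Rlt_le/Rinv_0_lt_compat.
by rewrite -Rinv_1; apply: Rinv_le_contravar; lra.
Qed.

Lemma cv_infty_div_sq_ln (a : nat -> R) :
  cv_infty (fun n => a n / (INR n * INR n * ln (INR n))) ->
  cv_infty (fun n => a n / INR n ^ 2 / ln (INR n)).
Proof.
apply: (@cv_infty_le _ _ 2) => n n2.
have ln0 := ln_INR_gt0 n2; have n1 : 1 <= INR n by apply: (le_INR 1); lia.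
by apply: Req_le; field; lra.
Qed.

(* [a n >= c (m + 1) ln n] eventually, so the term is at most [C / n]. *)
Lemma pow_exp_vanish (C c : R) (m : nat) (a : nat -> R) : 0 <= C -> 0 < c ->
  cv_infty (fun n => a n / ln (INR n)) ->
  Un_cv (fun n => C * INR n ^ m * exp (- a n / c)) 0.
Proof.
move=> C0 c0 a_big eps eps0.
have [N1 a_ge] := a_big (c * INR m.+1).
have [N2 inv_small] := cv_infty_cv_0 INR cv_infty_INR (eps / (C + 1))
                         (Rdiv_lt_0_compat eps (C + 1) eps0 ltac:(lra)).
exists (Nat.max 2 (Nat.max N1 N2)) => n n_ge.
have n1 : 1 < INR n.
  by have n2 : INR 2 <= INR n := le_INR 2 n ltac:(lia); simpl in n2; lra.
have ln0 : 0 < ln (INR n) by apply: ln_INR_gt0; lia.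
have a_ge_n : c * (INR m.+1 * ln (INR n)) <= a n.
  have := a_ge n ltac:(lia); move/(Rmult_lt_compat_r _ _ _ ln0).
  have -> : a n / ln (INR n) * ln (INR n) = a n by field; lra.
  by move=> ?; lra.
have exp_le : exp (- a n / c) <= / INR n ^ m.+1.
  rewrite -[X in _ <= X]exp_ln; last by apply/Rinv_0_lt_compat/pow_lt; lra.
  rewrite ln_Rinv ?ln_pow; try (apply: pow_lt); try lra.
  apply: exp_le_mono; apply: (Rmult_le_reg_r c) => //.
  by rewrite /Rdiv Rmult_assoc Rinv_l; lra.
have term0 : 0 <= C * INR n ^ m * exp (- a n / c).
  by apply/Rmult_le_pos/Rlt_le/exp_pos/Rmult_le_pos => //; apply/pow_le; lra.
have term_le : C * INR n ^ m * exp (- a n / c) <= C * / INR n.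
  apply: Rle_trans (Rmult_le_compat_l _ _ _ _ exp_le) _; first exact/Rmult_le_pos/pow_le/pos_INR.
  rewrite Rmult_assoc; apply: Rmult_le_compat_l => //.
  have := pow_lt (INR n) m ltac:(lra) => ?.
  by apply: Req_le; rewrite /=; field; split; lra.
have := inv_small n ltac:(lia); rewrite /R_dist Rminus_0_r Rabs_right; last first.
  by apply/Rle_ge/Rlt_le/Rinv_0_lt_compat; lra.
rewrite Rminus_0_r Rabs_right; last by apply: Rle_ge.
move=> inv_lt; apply: Rle_lt_trans term_le _.
apply: Rle_lt_trans (Rmult_le_compat_l _ _ _ C0 (Rlt_le _ _ inv_lt)) _.
rewrite /Rdiv -Rmult_assoc; apply: (Rmult_lt_reg_r (C + 1)); first lra.
by rewrite Rmult_assoc Rinv_l; nra.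
Qed.

Theorem lemma6p4 :
  (forall D : nat -> nat,
     cv_infty (fun k => (INR (D k) / (INR k * ln (INR k)))%R) ->
     exists c : R, (0 < c)%R /\
       Un_cv (fun k => prob (fun S : config (D k) k =>
                         kappa_ge S (c * sqrt (INR k))%R)) 1%R) /\
  (forall D : nat -> nat,
     cv_infty (fun k => (INR (D k) / (INR k * INR k * ln (INR k)))%R) ->
     Un_cv (fun k => prob (fun S : config (D k) k => lambda_le S 2%R)) 1%R).
Proof.
split=> D D_big.
- exists (1/2); split; first lra.
  apply: (@cv_one_of_lower_bound _ (fun k => 2 * INR k ^ 1 * exp (- INR (D k) / 128)) 1).
  + by move=> k; rewrite prob_uprob; apply: uprob_le1.
  + by move=> k k1; rewrite pow_1; apply/prob_kappa_ge/ltP.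
  apply: pow_exp_vanish; [lra | lra | ].
  by apply: cv_infty_div_ln D_big => n; apply: pos_INR.
- apply: (@cv_one_of_lower_bound _
            (fun k => 4 * INR k ^ 2 * exp (- (INR (D k) / INR k ^ 2) / 4608)) 1).
  + by move=> k; rewrite prob_uprob; apply: uprob_le1.
  + by move=> k k1; apply/prob_lambda_le/ltP.
  by apply: pow_exp_vanish; [lra | lra | apply: cv_infty_div_sq_ln].
Qed.
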